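(* Let $G$ be a Ricci-flat graph with maximum degree at most $4$ that contains an edge $(x,y)$ with $d(x)=3$ and $d(y)=4$. Then $(x,y)$ is not contained in any cycle of length $3$.
   Context: All graphs are simple (no loops or multiple edges), undirected, connected and locally finite; $d(x)$ is the degree of $x$ and $d(x,y)$ the graph distance. For a vertex $x$ and $\alpha\in[0,1]$ let $\mu_x^\alpha$ be the probability measure with $\mu_x^\alpha(x)=\alpha$, $\mu_x^\alpha(z)=\frac{1-\alpha}{d(x)}$ for $z\sim x$, and $0$ otherwise. The transportation distance is $W(\mu_1,\mu_2)=\inf_A\sum_{u,v}A(u,v)d(u,v)$ over all couplings $A$ of $\mu_1,\mu_2$. Set $k_\alpha(x,y)=1-W(\mu_x^\alpha,\mu_y^\alpha)/d(x,y)$ and $k(x,y)=\lim_{\alpha\to1}k_\alpha(x,y)/(1-\alpha)$ (Lin–Lu–Yau Ricci curvature). A graph is Ricci-flat if $k(x,y)=0$ for every edge $(x,y)$. An edge is contained in a cycle of length $\ell$ if some cycle subgraph of $G$ with $\ell$ vertices uses that edge. *)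

From Stdlib Require Import Reals Lra List Classical ClassicalEpsilon.
From Coquelicot Require Import Coquelicot.
Import ListNotations.
Open Scope R_scope.

(* A locally finite simple graph on a vertex type V is given by the list of
   neighbours of each vertex: nbr x lists the neighbours of x. *)
Definition adj {V : Type} (nbr : V -> list V) (x y : V) : Prop := In y (nbr x).

Definition simple_graph {V : Type} (nbr : V -> list V) : Prop :=
  (forall x, NoDup (nbr x)) /\
  (forall x, ~ adj nbr x x) /\
  (forall x y, adj nbr x y -> adj nbr y x).

Definition deg {V : Type} (nbr : V -> list V) (x : V) : nat := length (nbr x).

Inductive walk {V : Type} (nbr : V -> list V) : nat -> V -> V -> Prop :=
| walk0 : forall u, walk nbr 0 u u
| walkS : forall n u w v, adj nbr u w -> walk nbr n w v -> walk nbr (S n) u v.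

Definition connected {V : Type} (nbr : V -> list V) : Prop :=
  forall u v, exists n, walk nbr n u v.

(* graph distance: least length of a walk (finite for connected graphs) *)
Definition gdist {V : Type} (nbr : V -> list V) (u v : V) : R :=
  real (Glb_Rbar (fun r => exists n, walk nbr n u v /\ r = INR n)).

Definition decP (P : Prop) : bool :=
  if excluded_middle_informative P then true else false.

Definition mu {V : Type} (nbr : V -> list V) (alpha : R) (x z : V) : R :=
  (if decP (z = x) then alpha else 0) +
  (if decP (In z (nbr x)) then (1 - alpha) / INR (deg nbr x) else 0).

Definition lsum {T : Type} (l : list T) (f : T -> R) : R :=
  fold_right Rplus 0 (map f l).

(* support list of mu_x^alpha (without duplicates in a simple graph) *)
Definition ball1 {V : Type} (nbr : V -> list V) (x : V) : list V := x :: nbr x.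

(* couplings of mu_x^alpha and mu_y^alpha; any coupling is supported on
   ball1 x * ball1 y, so it is given by its values there *)
Definition coupling {V : Type} (nbr : V -> list V) (alpha : R) (x y : V)
  (A : V -> V -> R) : Prop :=
  (forall u v, 0 <= A u v) /\
  (forall u, In u (ball1 nbr x) -> lsum (ball1 nbr y) (fun v => A u v) = mu nbr alpha x u) /\
  (forall v, In v (ball1 nbr y) -> lsum (ball1 nbr x) (fun u => A u v) = mu nbr alpha y v).

Definition transport_cost {V : Type} (nbr : V -> list V) (x y : V) (A : V -> V -> R) : R :=
  lsum (ball1 nbr x) (fun u => lsum (ball1 nbr y) (fun v => A u v * gdist nbr u v)).

Definition W {V : Type} (nbr : V -> list V) (alpha : R) (x y : V) : R :=
  real (Glb_Rbar (fun c => exists A, coupling nbr alpha x y A /\ c = transport_cost nbr x y A)).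

Definition k_alpha {V : Type} (nbr : V -> list V) (alpha : R) (x y : V) : R :=
  1 - W nbr alpha x y / gdist nbr x y.

(* Lin-Lu-Yau curvature k(x,y) = lim_{alpha -> 1} k_alpha(x,y)/(1-alpha);
   "k(x,y) = c" means this limit exists and equals c. *)
Definition llY_curvature_is {V : Type} (nbr : V -> list V) (x y : V) (c : R) : Prop :=
  filterlim (fun alpha => k_alpha nbr alpha x y / (1 - alpha)) (at_left 1) (locally c).

Definition ricci_flat {V : Type} (nbr : V -> list V) : Prop :=
  forall x y, adj nbr x y -> llY_curvature_is nbr x y 0.

Definition edge_in_cycle3 {V : Type} (nbr : V -> list V) (x y : V) : Prop :=
  exists z, z <> x /\ z <> y /\ adj nbr x z /\ adj nbr y z.

(* The Lin-Lu-Yau curvature of an edge xy is read off W(mu_x^al, mu_y^al) for al near 1: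
   an explicit transport plan of cost at most 1 - c (1 - al) forces k(x,y) >= c > 0, and a
   1-Lipschitz function f with E_{mu_x} f - E_{mu_y} f >= 1 + c (1 - al) forces
   k(x,y) <= -c < 0 (the easy half of Kantorovich duality).

   Suppose xy lies in a triangle xyz and let a be the third neighbour of x.  If a is a leaf,
   k(x,a) > 0.  If d(z) is 2 or 3, k(x,z) > 0.  If d(z) = 4, write N(y) = {x,z,b,c} and
   N(z) = {x,y,w1,w2}: when a is within distance 2 of one of b, c, w1, w2, routing mass
   through that vertex gives k(x,y) > 0 or k(x,z) > 0; otherwise every neighbour of a other
   than x is at distance at least 3 from y and z, and the potential with values 2, 3, 3, 1
   at x, y, z, a (and 0 elsewhere) gives k(x,a) < 0.  Each case contradicts Ricci-flatness. *)

From Stdlib Require Import Reals Lra Lia List Permutation Classical ClassicalEpsilon.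
From Coquelicot Require Import Coquelicot.
Import ListNotations.
Open Scope R_scope.

Lemma decP_spec (P : Prop) : (P /\ decP P = true) \/ (~ P /\ decP P = false).
Proof. unfold decP; destruct (excluded_middle_informative P); auto. Qed.

Lemma decP_iff (P Q : Prop) : (P <-> Q) -> decP P = decP Q.
Proof.
  intros HPQ.
  destruct (decP_spec P) as [[HP ->]|[HP ->]], (decP_spec Q) as [[HQ ->]|[HQ ->]]; tauto.
Qed.

Ltac decide_decP :=
  repeat match goal with |- context [decP ?P] =>
    let H := fresh "H" in
    destruct (decP_spec P) as [[H ->]|[H ->]]; try (exfalso; simpl in H; intuition congruence)
  end.

Section Sums.
Context {T : Type}.

Lemma lsum_plus (l : list T) f g : lsum l (fun a => f a + g a) = lsum l f + lsum l g.
Proof. induction l; unfold lsum in *; simpl; [ring | rewrite IHl; ring]. Qed.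

Lemma lsum_minus (l : list T) f g : lsum l (fun a => f a - g a) = lsum l f - lsum l g.
Proof. induction l; unfold lsum in *; simpl; [ring | rewrite IHl; ring]. Qed.

Lemma lsum_scal_l (l : list T) f c : lsum l (fun a => c * f a) = c * lsum l f.
Proof. induction l; unfold lsum in *; simpl; [ring | rewrite IHl; ring]. Qed.

Lemma lsum_scal_r (l : list T) f c : lsum l (fun a => f a * c) = lsum l f * c.
Proof. induction l; unfold lsum in *; simpl; [ring | rewrite IHl; ring]. Qed.

Lemma lsum_const (l : list T) c : lsum l (fun _ => c) = INR (length l) * c.
Proof.
  induction l; unfold lsum in *; simpl length; [simpl; ring|].
  rewrite S_INR; simpl; rewrite IHl; ring.
Qed.

Lemma lsum_zero (l : list T) : lsum l (fun _ => 0) = 0.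
Proof. rewrite lsum_const; ring. Qed.

Lemma lsum_ext_in (l : list T) f g : (forall a, In a l -> f a = g a) -> lsum l f = lsum l g.
Proof.
  induction l as [|b l IHl]; intros Hfg; unfold lsum in *; simpl; auto.
  rewrite Hfg, IHl; simpl; auto; intros; apply Hfg; simpl; auto.
Qed.

Lemma lsum_le (l : list T) f g : (forall a, In a l -> f a <= g a) -> lsum l f <= lsum l g.
Proof.
  induction l as [|b l IHl]; intros Hfg; unfold lsum in *; simpl; [lra|].
  apply Rplus_le_compat; [apply Hfg | apply IHl]; simpl; auto.
  intros; apply Hfg; simpl; auto.
Qed.

Lemma lsum_nonneg (l : list T) f : (forall a, In a l -> 0 <= f a) -> 0 <= lsum l f.
Proof. intros Hf; rewrite <- (lsum_zero l); apply lsum_le; auto. Qed.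

Lemma lsum_same (l l' : list T) f :
  NoDup l -> NoDup l' -> (forall u, In u l <-> In u l') -> lsum l f = lsum l' f.
Proof.
  intros Hl Hl' Hll'; pose proof (NoDup_Permutation Hl Hl' Hll') as Hp; clear - Hp.
  induction Hp; unfold lsum in *; simpl; lra.
Qed.

Lemma lsum_select_notin (l : list T) a g :
  ~ In a l -> lsum l (fun s => if decP (a = s) then g s else 0) = 0.
Proof.
  intros Ha; transitivity (lsum l (fun _ => 0)); [apply lsum_ext_in | apply lsum_zero]; intros s Hs.
  destruct (decP_spec (a = s)) as [[-> _]|[_ ->]]; [contradiction | reflexivity].
Qed.

Lemma lsum_select (l : list T) a g :
  NoDup l -> In a l -> lsum l (fun s => if decP (a = s) then g s else 0) = g a.
Proof.
  induction l as [|b l IHl]; intros Hl Ha; [contradiction|].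
  apply NoDup_cons_iff in Hl as [Hb Hl].
  unfold lsum; simpl; fold (lsum l (fun s => if decP (a = s) then g s else 0)).
  destruct Ha as [<-|Ha].
  - rewrite lsum_select_notin by assumption; decide_decP; ring.
  - rewrite IHl by assumption; decide_decP; ring.
Qed.

End Sums.

Lemma lsum_swap {T U : Type} (l1 : list T) (l2 : list U) F :
  lsum l1 (fun a => lsum l2 (fun b => F a b)) = lsum l2 (fun b => lsum l1 (fun a => F a b)).
Proof.
  induction l1 as [|a l1 IHl1].
  - symmetry; apply lsum_zero.
  - unfold lsum at 1; simpl; fold (lsum l1 (fun a => lsum l2 (fun b => F a b))).
    rewrite IHl1, <- lsum_plus; reflexivity.
Qed.

Lemma real_Glb_nonneg (E : R -> Prop) : (forall r, E r -> 0 <= r) -> 0 <= real (Glb_Rbar E).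
Proof.
  intros HE; destruct (Glb_Rbar_correct E) as [_ Hglb].
  assert (H0 : Rbar_le 0 (Glb_Rbar E)) by (apply Hglb; intros r Hr; apply HE, Hr).
  destruct (Glb_Rbar E); simpl in *; lra.
Qed.

Lemma real_Glb_le (E : R -> Prop) r :
  (forall s, E s -> 0 <= s) -> E r -> real (Glb_Rbar E) <= r.
Proof.
  intros HE Hr; destruct (Glb_Rbar_correct E) as [Hlb Hglb].
  assert (H0 : Rbar_le 0 (Glb_Rbar E)) by (apply Hglb; intros s Hs; apply HE, Hs).
  specialize (Hlb r Hr); destruct (Glb_Rbar E); simpl in *; tauto.
Qed.

Lemma real_Glb_ge (E : R -> Prop) m r :
  (forall s, E s -> m <= s) -> E r -> m <= real (Glb_Rbar E).
Proof.
  intros HE Hr; destruct (Glb_Rbar_correct E) as [Hlb Hglb].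
  assert (Hm : Rbar_le m (Glb_Rbar E)) by (apply Hglb; intros s Hs; apply HE, Hs).
  specialize (Hlb r Hr); destruct (Glb_Rbar E); simpl in *; tauto.
Qed.

Section Transfers.
Context {V : Type}.

(* A transport plan is a finite list of transfers; [len] bounds the distance over which the
   mass is moved, so [route_cost] bounds the transport cost. *)
Record transfer : Type := Transfer { mass : R; src : V; dst : V; len : nat }.

Definition plan (l : list transfer) (u v : V) : R :=
  lsum l (fun e => if decP (src e = u) then if decP (dst e = v) then mass e else 0 else 0).

Definition outflow (l : list transfer) (u : V) : R :=
  lsum l (fun e => if decP (src e = u) then mass e else 0).

Definition inflow (l : list transfer) (v : V) : R :=
  lsum l (fun e => if decP (dst e = v) then mass e else 0).

Definition route_cost (l : list transfer) : R := lsum l (fun e => mass e * INR (len e)).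

Lemma lsum_plan_r (l : list transfer) (Ly : list V) u :
  NoDup Ly -> (forall e, In e l -> In (dst e) Ly) -> lsum Ly (plan l u) = outflow l u.
Proof.
  intros HLy Hl; unfold plan; rewrite lsum_swap; apply lsum_ext_in; intros e He.
  decide_decP; [apply (lsum_select Ly (dst e) (fun _ => mass e)); auto | apply lsum_zero].
Qed.

Lemma lsum_plan_l (l : list transfer) (Lx : list V) v :
  NoDup Lx -> (forall e, In e l -> In (src e) Lx) -> lsum Lx (fun u => plan l u v) = inflow l v.
Proof.
  intros HLx Hl; unfold plan; rewrite lsum_swap; apply lsum_ext_in; intros e He.
  apply (lsum_select Lx (src e) (fun _ => if decP (dst e = v) then mass e else 0)); auto.
Qed.

Lemma lsum_plan_cost (l : list transfer) (Lx Ly : list V) (d : V -> V -> R) :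
  NoDup Lx -> NoDup Ly -> (forall e, In e l -> In (src e) Lx /\ In (dst e) Ly) ->
  lsum Lx (fun u => lsum Ly (fun v => plan l u v * d u v))
  = lsum l (fun e => mass e * d (src e) (dst e)).
Proof.
  intros HLx HLy Hl; unfold plan.
  transitivity (lsum Lx (fun u => lsum l (fun e => lsum Ly (fun v =>
    (if decP (src e = u) then if decP (dst e = v) then mass e else 0 else 0) * d u v)))).
  { apply lsum_ext_in; intros u _; symmetry; rewrite lsum_swap.
    apply lsum_ext_in; intros v _; apply lsum_scal_r. }
  rewrite lsum_swap; apply lsum_ext_in; intros e He; destruct (Hl e He) as [Hsrc Hdst].
  rewrite (lsum_ext_in Lx _ (fun u => if decP (src e = u) then mass e * d u (dst e) else 0)).
  - apply (lsum_select Lx (src e) (fun u => mass e * d u (dst e))); auto.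
  - intros u _; decide_decP.
    + rewrite (lsum_ext_in Ly _ (fun v => if decP (dst e = v) then mass e * d u v else 0)).
      * apply (lsum_select Ly (dst e) (fun v => mass e * d u v)); auto.
      * intros v _; decide_decP; ring.
    + transitivity (lsum Ly (fun _ => 0)); [apply lsum_ext_in; intros; ring | apply lsum_zero].
Qed.

End Transfers.

Section Graph.
Context {V : Type} (nbr : V -> list V).
Hypothesis nbr_simple : simple_graph nbr.
Hypothesis nbr_connected : connected nbr.

Lemma adj_sym u v : adj nbr u v -> adj nbr v u.
Proof. apply nbr_simple. Qed.

Lemma adj_neq u v : adj nbr u v -> u <> v.
Proof. intros Huv ->; apply (proj1 (proj2 nbr_simple) v Huv). Qed.

Lemma ball1_NoDup u : NoDup (ball1 nbr u).
Proof. constructor; [apply (proj1 (proj2 nbr_simple)) | apply nbr_simple]. Qed.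

Lemma gdist_nonneg u v : 0 <= gdist nbr u v.
Proof. apply real_Glb_nonneg; intros r [n [_ ->]]; apply pos_INR. Qed.

Lemma gdist_le_walk n u v : walk nbr n u v -> gdist nbr u v <= INR n.
Proof. intros Hw; apply real_Glb_le; [intros r [m [_ ->]]; apply pos_INR | eauto]. Qed.

Lemma gdist_ge_walks k u v :
  (forall n, walk nbr n u v -> (k <= n)%nat) -> INR k <= gdist nbr u v.
Proof.
  intros Hk; destruct (nbr_connected u v) as [n Hn].
  apply (real_Glb_ge _ _ (INR n)); [intros r [m [Hm ->]]; apply le_INR; auto | eauto].
Qed.

Lemma gdist_edge u v : adj nbr u v -> gdist nbr u v = 1.
Proof.
  intros Huv; apply Rle_antisym.
  - apply (gdist_le_walk 1); eauto using walk.
  - unfold gdist; apply (real_Glb_ge _ _ 1); [|exists 1%nat; eauto using walk].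
    intros r [[|m] [Hm ->]].
    + inversion Hm; subst; contradiction (adj_neq v v Huv eq_refl).
    + rewrite S_INR; pose proof (pos_INR m); lra.
Qed.

Lemma gdist_ge_3 u v :
  u <> v -> ~ adj nbr u v -> (forall w, adj nbr u w -> adj nbr w v -> False) -> 3 <= gdist nbr u v.
Proof.
  intros Hneq Hadj Hw; replace 3 with (INR 3) by (simpl; lra).
  apply gdist_ge_walks; intros [|[|[|n]]] Hn; try lia; exfalso.
  - inversion Hn; subst; contradiction.
  - inversion Hn as [|? ? w ? Huw Hwv]; subst; inversion Hwv; subst; contradiction.
  - inversion Hn as [|? ? w ? Huw Hwv]; subst.
    inversion Hwv as [|? ? w' ? Hww' Hw'v]; subst; inversion Hw'v; subst; eauto.
Qed.

Lemma gdist_ge_2 u v : u <> v -> ~ adj nbr u v -> 2 <= gdist nbr u v.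
Proof.
  intros Hneq Hadj; replace 2 with (INR 2) by (simpl; lra).
  apply gdist_ge_walks; intros [|[|n]] Hn; try lia; exfalso.
  - inversion Hn; subst; contradiction.
  - inversion Hn as [|? ? w ? Huw Hwv]; subst; inversion Hwv; subst; contradiction.
Qed.

Lemma gdist_ge_1 u v : u <> v -> 1 <= gdist nbr u v.
Proof.
  intros Hneq; apply (gdist_ge_walks 1); intros [|n] Hn; [inversion Hn; contradiction | lia].
Qed.

Definition mean (al : R) (x : V) (f : V -> R) : R :=
  lsum (ball1 nbr x) (fun u => f u * mu nbr al x u).

Lemma mu_nonneg al x u : 0 <= al <= 1 -> 0 <= mu nbr al x u.
Proof.
  intros Hal; unfold mu; pose proof (pos_INR (deg nbr x)).
  assert (0 <= (1 - al) / INR (deg nbr x)).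
  { destruct (Req_dec (INR (deg nbr x)) 0) as [->|Hd];
      [unfold Rdiv; rewrite Rinv_0; lra | apply Rdiv_le_0_compat; lra]. }
  decide_decP; lra.
Qed.

Lemma mean_ball al x f :
  mean al x f = al * f x + (1 - al) / INR (deg nbr x) * lsum (nbr x) f.
Proof.
  assert (Hx : ~ In x (nbr x)) by apply nbr_simple.
  unfold mean, ball1, lsum at 1; simpl; fold (lsum (nbr x) (fun u => f u * mu nbr al x u)).
  rewrite <- lsum_scal_l; unfold mu; decide_decP.
  rewrite Rplus_0_r, Rmult_comm; apply Rplus_eq_compat_l.
  apply lsum_ext_in; intros u Hu; pose proof (adj_neq x u Hu); decide_decP; ring.
Qed.

Lemma lsum_mu_ball al x : (1 <= deg nbr x)%nat -> lsum (ball1 nbr x) (mu nbr al x) = 1.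
Proof.
  intros Hx.
  transitivity (mean al x (fun _ => 1)); [apply lsum_ext_in; intros; unfold mean; ring|].
  rewrite mean_ball, lsum_const; fold (deg nbr x).
  apply le_INR in Hx; simpl in Hx; field; lra.
Qed.

Lemma product_coupling al x y :
  adj nbr x y -> 0 <= al <= 1 -> coupling nbr al x y (fun u v => mu nbr al x u * mu nbr al y v).
Proof.
  intros Hxy Hal.
  assert (Hdeg : forall u v, adj nbr u v -> (1 <= deg nbr u)%nat).
  { intros u v Huv; unfold adj, deg in *; destruct (nbr u); [contradiction | simpl; lia]. }
  pose proof (Hdeg x y Hxy); pose proof (Hdeg y x (adj_sym x y Hxy)).
  split; [|split].
  - intros u v; apply Rmult_le_pos; apply mu_nonneg; auto.
  - intros u _; rewrite lsum_scal_l, lsum_mu_ball by assumption; ring.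
  - intros v _; rewrite lsum_scal_r, lsum_mu_ball by assumption; ring.
Qed.

Lemma mean_sub_le_cost al x y A f :
  coupling nbr al x y A ->
  (forall u v, In u (ball1 nbr x) -> In v (ball1 nbr y) -> f u - f v <= gdist nbr u v) ->
  mean al x f - mean al y f <= transport_cost nbr x y A.
Proof.
  intros [HA [Hrow Hcol]] Hf.
  assert (Hx : mean al x f
               = lsum (ball1 nbr x) (fun u => lsum (ball1 nbr y) (fun v => A u v * f u))).
  { unfold mean; apply lsum_ext_in; intros u Hu; rewrite lsum_scal_r, Hrow by assumption; ring. }
  assert (Hy : mean al y f
               = lsum (ball1 nbr x) (fun u => lsum (ball1 nbr y) (fun v => A u v * f v))).
  { unfold mean; rewrite lsum_swap; apply lsum_ext_in; intros v Hv.
    rewrite lsum_scal_r, Hcol by assumption; ring. }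
  rewrite Hx, Hy, <- lsum_minus; unfold transport_cost.
  apply lsum_le; intros u Hu; rewrite <- lsum_minus; apply lsum_le; intros v Hv.
  rewrite <- Rmult_minus_distr_l; apply Rmult_le_compat_l; auto.
Qed.

Lemma W_le_cost al x y A : coupling nbr al x y A -> W nbr al x y <= transport_cost nbr x y A.
Proof.
  intros HA; apply real_Glb_le; [|eauto].
  intros r [B [[HB _] ->]]; apply lsum_nonneg; intros u _; apply lsum_nonneg; intros v _.
  apply Rmult_le_pos; [apply HB | apply gdist_nonneg].
Qed.

Definition transport_plan (al : R) (x y : V) (l : list (@transfer V)) : Prop :=
  (forall e, In e l -> 0 <= mass e /\ In (src e) (ball1 nbr x) /\ In (dst e) (ball1 nbr y)
                       /\ gdist nbr (src e) (dst e) <= INR (len e)) /\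
  (forall u, In u (ball1 nbr x) -> outflow l u = mu nbr al x u) /\
  (forall v, In v (ball1 nbr y) -> inflow l v = mu nbr al y v).

Lemma W_le_route_cost al x y l : transport_plan al x y l -> W nbr al x y <= route_cost l.
Proof.
  intros [Hl [Hout Hin]].
  assert (Hsupp : forall e, In e l -> In (src e) (ball1 nbr x) /\ In (dst e) (ball1 nbr y))
    by (intros e He; destruct (Hl e He) as (_ & ? & ? & _); auto).
  assert (Hcoupling : coupling nbr al x y (plan l)).
  { split; [|split].
    - intros u v; apply lsum_nonneg; intros e He; destruct (Hl e He); decide_decP; lra.
    - intros u Hu; rewrite lsum_plan_r; [auto | apply ball1_NoDup | apply Hsupp].
    - intros v Hv; rewrite lsum_plan_l; [auto | apply ball1_NoDup | apply Hsupp]. }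
  eapply Rle_trans; [apply (W_le_cost _ _ _ _ Hcoupling)|].
  unfold transport_cost; rewrite lsum_plan_cost; [| apply ball1_NoDup.. | exact Hsupp].
  apply lsum_le; intros e He; destruct (Hl e He) as (? & _ & _ & ?).
  apply Rmult_le_compat_l; assumption.
Qed.

Lemma curvature0_near_1 x y c :
  llY_curvature_is nbr x y 0 -> 0 < c ->
  exists al, 1/2 < al < 1 /\ Rabs (k_alpha nbr al x y / (1 - al)) < c.
Proof.
  intros Hlim Hc.
  apply filterlim_locally with (eps := mkposreal c Hc) in Hlim.
  assert (Hhalf : at_left 1 (fun al => 1/2 < al)).
  { exists (mkposreal (1/2) ltac:(lra)); intros al Hal _.
    apply Rabs_def2 in Hal; simpl in Hal; unfold minus, plus, opp in Hal; simpl in Hal; lra. }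
  assert (Hbelow : at_left 1 (fun al => al < 1)) by (exists (mkposreal 1 Rlt_0_1); auto).
  destruct (filter_ex (F := at_left 1) _ (filter_and _ _ Hlim (filter_and _ _ Hhalf Hbelow)))
    as [al [Hk Hal]].
  exists al; split; [exact Hal|].
  unfold ball in Hk; simpl in Hk; unfold AbsRing_ball, abs, minus, plus, opp in Hk; simpl in Hk.
  rewrite Ropp_0, Rplus_0_r in Hk; exact Hk.
Qed.

Lemma k_alpha_edge al x y : adj nbr x y -> k_alpha nbr al x y = 1 - W nbr al x y.
Proof. intros Hxy; unfold k_alpha; rewrite gdist_edge by assumption; field. Qed.

Lemma not_flat_of_cheap_plans x y c :
  adj nbr x y -> 0 < c ->
  (forall al, 1/2 < al < 1 ->
     exists l, transport_plan al x y l /\ route_cost l <= 1 - c * (1 - al)) ->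
  ~ llY_curvature_is nbr x y 0.
Proof.
  intros Hxy Hc Hplans Hflat.
  destruct (curvature0_near_1 x y c Hflat Hc) as [al [Hal Hk]].
  destruct (Hplans al Hal) as [l [Hl Hcost]].
  pose proof (W_le_route_cost al x y l Hl).
  rewrite k_alpha_edge in Hk by assumption; apply Rabs_def2 in Hk as [Hk _].
  apply Rlt_not_le in Hk; apply Hk, Rle_div_r; lra.
Qed.

Lemma not_flat_of_potential x y c f :
  adj nbr x y -> 0 < c ->
  (forall u v, In u (ball1 nbr x) -> In v (ball1 nbr y) -> f u - f v <= gdist nbr u v) ->
  (forall al, 1/2 < al < 1 -> 1 + c * (1 - al) <= mean al x f - mean al y f) ->
  ~ llY_curvature_is nbr x y 0.
Proof.
  intros Hxy Hc Hf Hmean Hflat.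
  destruct (curvature0_near_1 x y c Hflat Hc) as [al [Hal Hk]].
  assert (HW : 1 + c * (1 - al) <= W nbr al x y).
  { apply (real_Glb_ge _ _ (transport_cost nbr x y (fun u v => mu nbr al x u * mu nbr al y v))).
    - intros r [A [HA ->]]; eapply Rle_trans; [apply Hmean, Hal | apply mean_sub_le_cost; auto].
    - eexists; split; [apply product_coupling; auto; lra | reflexivity]. }
  rewrite k_alpha_edge in Hk by assumption; apply Rabs_def2 in Hk as [_ Hk].
  apply Rlt_not_le in Hk; apply Hk, Rle_div_l; lra.
Qed.

Definition nbhd_is (x : V) (L : list V) : Prop := NoDup L /\ forall u, adj nbr x u <-> In u L.

Lemma nbhd_is_perm x L L' : Permutation L L' -> nbhd_is x L -> nbhd_is x L'.
Proof.
  intros HLL' [HL Hx]; split; [exact (Permutation_NoDup HLL' HL)|].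
  intros u; rewrite Hx; split; apply Permutation_in; auto using Permutation_sym.
Qed.

Lemma nbhd_is_deg x L : nbhd_is x L -> deg nbr x = length L.
Proof.
  intros [HL Hx]; apply Permutation_length, NoDup_Permutation;
    [apply nbr_simple | exact HL | apply Hx].
Qed.

Lemma nbhd_is_NoDup_cons x L : nbhd_is x L -> NoDup (x :: L).
Proof.
  intros [HL Hx]; constructor; [|exact HL].
  intros HxL; apply Hx in HxL; exact (adj_neq x x HxL eq_refl).
Qed.

Lemma nbhd_is_adj x L u : nbhd_is x L -> In u L -> adj nbr x u /\ adj nbr u x.
Proof. intros [_ Hx] Hu; apply Hx in Hu; auto using adj_sym. Qed.

Lemma in_ball1_nbhd x L u : nbhd_is x L -> In u (ball1 nbr x) <-> u = x \/ In u L.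
Proof. intros [_ Hx]; unfold ball1; simpl; rewrite <- Hx; intuition. Qed.

Lemma mu_nbhd al x L u :
  nbhd_is x L ->
  mu nbr al x u = (if decP (u = x) then al else 0)
                  + (if decP (In u L) then (1 - al) / INR (length L) else 0).
Proof.
  intros HL; unfold mu; rewrite (nbhd_is_deg x L HL), (decP_iff (In u (nbr x)) (In u L));
    [reflexivity | apply HL].
Qed.

Lemma nbhd_complete x k :
  NoDup k -> (forall u, In u k -> adj nbr x u) ->
  exists r, nbhd_is x (k ++ r) /\ deg nbr x = (length k + length r)%nat.
Proof.
  intros Hk Hkx; set (r := filter (fun u => negb (decP (In u k))) (nbr x)).
  assert (Hr : forall u, In u r <-> adj nbr x u /\ ~ In u k).
  { intros u; unfold r; rewrite filter_In.
    destruct (decP_spec (In u k)) as [[? ->]|[? ->]]; simpl; intuition congruence. }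
  assert (Hkr : nbhd_is x (k ++ r)).
  { split.
    - apply NoDup_app; [exact Hk | apply NoDup_filter, nbr_simple |].
      intros u Hu Hu'; apply Hr in Hu'; tauto.
    - intros u; rewrite in_app_iff, Hr; destruct (classic (In u k)); intuition. }
  exists r; split; [exact Hkr|].
  rewrite <- length_app; apply nbhd_is_deg, Hkr.
Qed.

Ltac split_not_or H :=
  match type of H with
  | ~ (_ \/ _) => let H1 := fresh "Hneq" in apply not_or_and in H as [H1 H]; split_not_or H
  | ~ False => clear H
  | _ => idtac
  end.

Ltac unpack_NoDup D :=
  match type of D with
  | NoDup (_ :: _) =>
      let Hn := fresh "Hnotin" in
      apply NoDup_cons_iff in D as [Hn D]; simpl in Hn; split_not_or Hn; unpack_NoDup D
  | NoDup [] => clear D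
  end.

Ltac unpack_nbhd N :=
  match type of N with
  | nbhd_is ?x ?L =>
      let D := fresh "D" in pose proof (nbhd_is_NoDup_cons x L N) as D; unpack_NoDup D;
      let rec go l :=
        match l with
        | ?u :: ?l' =>
            let H1 := fresh "Hadj" in let H2 := fresh "Hadj" in
            destruct (nbhd_is_adj x L u N ltac:(simpl; tauto)) as [H1 H2]; go l'
        | [] => idtac
        end
      in go L
  end.

Ltac solve_marginal N :=
  let u := fresh "u" in let Hu := fresh "Hu" in
  intros u Hu; rewrite (mu_nbhd _ _ _ _ N); apply (in_ball1_nbhd _ _ _ N) in Hu;
  destruct Hu as [-> | Hu]; [| simpl in Hu; repeat destruct Hu as [<- | Hu]; try contradiction];
  unfold outflow, inflow, lsum; simpl; decide_decP; lra.

Ltac solve_transfer NX NY :=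
  cbn [mass src dst len];
  split; [lra|]; split; [apply (in_ball1_nbhd _ _ _ NX); simpl; intuition|];
  split; [apply (in_ball1_nbhd _ _ _ NY); simpl; intuition|];
  first [assumption | apply gdist_le_walk; eauto 6 using walk].

Ltac solve_transport_plan NX NY :=
  split; [|split];
  [ let e := fresh "e" in let He := fresh "He" in
    intros e He; simpl in He; repeat destruct He as [<- | He]; try contradiction;
    solve_transfer NX NY
  | solve_marginal NX
  | solve_marginal NY ].

Lemma pendant_edge_not_flat x y z a :
  nbhd_is x [y; z; a] -> nbhd_is a [x] -> ~ llY_curvature_is nbr x a 0.
Proof.
  intros Nx Na; unpack_nbhd Nx; unpack_nbhd Na.
  apply (not_flat_of_cheap_plans x a (2/3)); [assumption | lra |]; intros al Hal.
  exists [Transfer (1 - al) x x 0; Transfer (2 * al - 1) x a 1; Transfer ((1 - al) / 3) a a 0;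
          Transfer ((1 - al) / 3) y a 2; Transfer ((1 - al) / 3) z a 2].
  split; [solve_transport_plan Nx Na | unfold route_cost, lsum; simpl; lra].
Qed.

Lemma triangle_edge_not_flat_deg2 x y z a :
  nbhd_is x [y; z; a] -> nbhd_is y [x; z] -> ~ llY_curvature_is nbr x y 0.
Proof.
  intros Nx Ny; unpack_nbhd Nx; unpack_nbhd Ny.
  apply (not_flat_of_cheap_plans x y (5/6)); [assumption | lra |]; intros al Hal.
  exists [Transfer ((1 - al) / 2) x x 0; Transfer ((3 * al - 1) / 2) x y 1;
          Transfer ((1 - al) / 3) y y 0; Transfer ((1 - al) / 3) z z 0;
          Transfer ((1 - al) / 6) a y 2; Transfer ((1 - al) / 6) a z 2].
  split; [solve_transport_plan Nx Ny | unfold route_cost, lsum; simpl; lra].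
Qed.

Lemma triangle_edge_not_flat_deg3 x y z a w :
  nbhd_is x [y; z; a] -> nbhd_is y [x; z; w] -> ~ llY_curvature_is nbr x y 0.
Proof.
  intros Nx Ny; unpack_nbhd Nx; unpack_nbhd Ny.
  apply (not_flat_of_cheap_plans x y (1/3)); [assumption | lra |]; intros al Hal.
  exists [Transfer ((1 - al) / 3) x x 0; Transfer ((4 * al - 1) / 3) x y 1;
          Transfer ((1 - al) / 3) y y 0; Transfer ((1 - al) / 3) z z 0;
          Transfer ((1 - al) / 3) a w 3].
  split; [solve_transport_plan Nx Ny | unfold route_cost, lsum; simpl; lra].
Qed.

Definition within_two (u v : V) : Prop := exists n, (n <= 2)%nat /\ walk nbr n u v.

Lemma within_two_refl u : within_two u u.
Proof. exists 0%nat; split; [lia | constructor]. Qed.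

Lemma within_two_adj u v : adj nbr u v -> within_two u v.
Proof. exists 1%nat; split; [lia | eauto using walk]. Qed.

Lemma within_two_adj2 u w v : adj nbr u w -> adj nbr w v -> within_two u v.
Proof. exists 2%nat; split; [lia | eauto using walk]. Qed.

Lemma gdist_within_two u v : within_two u v -> gdist nbr u v <= INR 2.
Proof.
  intros [n [Hn Hw]]; eapply Rle_trans; [apply (gdist_le_walk n), Hw | apply le_INR, Hn].
Qed.

Lemma triangle_edge_not_flat_deg4 x y z a w w' :
  nbhd_is x [y; z; a] -> nbhd_is y [x; z; w; w'] -> within_two a w -> ~ llY_curvature_is nbr x y 0.
Proof.
  intros Nx Ny Haw; unpack_nbhd Nx; unpack_nbhd Ny; apply gdist_within_two in Haw.
  apply (not_flat_of_cheap_plans x y (1/4)); [assumption | lra |]; intros al Hal.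
  exists [Transfer ((1 - al) / 4) x x 0; Transfer ((17 * al - 5) / 12) x y 1;
          Transfer ((1 - al) / 6) x w' 2; Transfer ((1 - al) / 3) y y 0;
          Transfer ((1 - al) / 4) z z 0; Transfer ((1 - al) / 12) z y 1;
          Transfer ((1 - al) / 4) a w 2; Transfer ((1 - al) / 12) a w' 3].
  split; [solve_transport_plan Nx Ny | unfold route_cost, lsum; simpl; lra].
Qed.

Lemma far_not_adj v x u w w' a :
  nbhd_is v [x; u; w; w'] -> a <> x -> a <> u -> ~ within_two a w -> ~ within_two a w' ->
  ~ adj nbr a v.
Proof.
  intros Nv Hax Hau Hw Hw' Hav; apply adj_sym, Nv in Hav; simpl in Hav.
  destruct Hav as [<-|[<-|[<-|[<-|[]]]]]; try congruence; eauto using within_two_refl.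
Qed.

Lemma far_gdist_ge_3 x y z a b c w1 w2 p :
  nbhd_is x [y; z; a] -> nbhd_is y [x; z; b; c] -> nbhd_is z [x; y; w1; w2] ->
  ~ within_two a b -> ~ within_two a c -> ~ within_two a w1 -> ~ within_two a w2 ->
  adj nbr a p -> p <> x -> 3 <= gdist nbr y p.
Proof.
  intros Nx Ny Nz Hb Hc Hw1 Hw2 Hap Hpx; unpack_nbhd Nx.
  assert (Hay : ~ adj nbr a y) by (apply (far_not_adj y x z b c); auto).
  assert (Haz : ~ adj nbr a z) by (apply (far_not_adj z x y w1 w2); auto).
  apply gdist_ge_3.
  - intros <-; contradiction.
  - intros Hyp; apply Ny in Hyp; simpl in Hyp.
    destruct Hyp as [<-|[<-|[<-|[<-|[]]]]]; eauto using within_two_adj.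
  - intros q Hyq Hqp; apply Ny in Hyq; simpl in Hyq.
    destruct Hyq as [<-|[<-|[<-|[<-|[]]]]]; eauto using within_two_adj2, adj_sym.
    + apply Nx in Hqp; simpl in Hqp.
      destruct Hqp as [<-|[<-|[<-|[]]]];
        [contradiction | contradiction | exact (adj_neq a a Hap eq_refl)].
    + apply Nz in Hqp; simpl in Hqp.
      destruct Hqp as [<-|[<-|[<-|[<-|[]]]]]; try contradiction; eauto using within_two_adj.
Qed.

Lemma far_edge_not_flat x y z a b c w1 w2 :
  nbhd_is x [y; z; a] -> nbhd_is y [x; z; b; c] -> nbhd_is z [x; y; w1; w2] ->
  ~ within_two a b -> ~ within_two a c -> ~ within_two a w1 -> ~ within_two a w2 ->
  (2 <= deg nbr a)%nat -> ~ llY_curvature_is nbr x a 0.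
Proof.
  intros Nx Ny Nz Hb Hc Hw1 Hw2 Ha.
  assert (Hfar : forall p, adj nbr a p -> p <> x -> 3 <= gdist nbr y p /\ 3 <= gdist nbr z p).
  { intros p Hap Hpx; split;
      [apply (far_gdist_ge_3 x y z a b c w1 w2) | apply (far_gdist_ge_3 x z y a w1 w2 b c)]; auto.
    apply (nbhd_is_perm x [y; z; a]); [constructor | exact Nx]. }
  unpack_nbhd Nx.
  assert (Hay : ~ adj nbr a y) by (apply (far_not_adj y x z b c); auto).
  assert (Haz : ~ adj nbr a z) by (apply (far_not_adj z x y w1 w2); auto).
  (* A 1-Lipschitz test function; [far_gdist_ge_3] is what lets it vanish on the other
     neighbours of [a]. *)
  set (f v := if decP (v = x) then 2 else if decP (v = y) then 3 else if decP (v = z) then 3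
              else if decP (v = a) then 1 else 0).
  apply (not_flat_of_potential x a (1/3) f); [assumption | lra | |].
  - intros u v Hu Hv; apply (in_ball1_nbhd _ _ _ Nx) in Hu; simpl in Hu.
    assert (Hya : 2 <= gdist nbr y a) by (apply gdist_ge_2; auto using adj_sym).
    assert (Hza : 2 <= gdist nbr z a) by (apply gdist_ge_2; auto using adj_sym).
    assert (gdist nbr x a = 1 /\ gdist nbr y x = 1 /\ gdist nbr z x = 1)
      by (repeat split; apply gdist_edge; assumption).
    pose proof (gdist_nonneg u v).
    destruct (classic (v = x)) as [-> | Hvx].
    + destruct Hu as [->|[<-|[<-|[<-|[]]]]]; unfold f; decide_decP; lra.
    + destruct Hv as [<- | Hav].
      * destruct Hu as [->|[<-|[<-|[<-|[]]]]]; unfold f; decide_decP; lra.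
      * pose proof (adj_neq a v Hav); destruct (Hfar v Hav Hvx).
        assert (2 <= gdist nbr x v).
        { apply gdist_ge_2; [congruence|]; intros Hxv; apply Nx in Hxv; simpl in Hxv.
          destruct Hxv as [<-|[<-|[<-|[]]]]; contradiction. }
        pose proof (gdist_ge_1 a v ltac:(assumption)).
        destruct Hu as [->|[<-|[<-|[<-|[]]]]]; unfold f; decide_decP; lra.
  - intros al Hal; rewrite !mean_ball.
    assert (Hx : lsum (nbr x) f = 7).
    { rewrite (lsum_same (nbr x) [y; z; a]); [| apply nbr_simple | apply Nx | apply Nx].
      unfold f, lsum; simpl; decide_decP; lra. }
    assert (Ha' : lsum (nbr a) f = 2).
    { rewrite (lsum_ext_in _ _ (fun v => if decP (x = v) then 2 else 0)).
      - apply (lsum_select (nbr a) x (fun _ => 2)); [apply nbr_simple | apply adj_sym; assumption].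
      - intros v Hav; pose proof (adj_neq a v Hav).
        assert (v <> y /\ v <> z) as [? ?] by (split; intros ->; contradiction).
        unfold f; decide_decP; reflexivity. }
    assert ((1 - al) / INR (deg nbr a) <= (1 - al) / 2).
    { apply le_INR in Ha; simpl in Ha.
      apply Rmult_le_compat_l; [lra|]; apply Rinv_le_contravar; lra. }
    rewrite Hx, Ha', (nbhd_is_deg x _ Nx); unfold f; simpl; decide_decP; lra.
Qed.

Lemma leaf_nbhd a x : adj nbr a x -> (deg nbr a < 2)%nat -> nbhd_is a [x].
Proof.
  intros Hax Ha.
  destruct (nbhd_complete a [x]) as (r & Na & Hdeg).
  - repeat constructor; simpl; tauto.
  - intros u [<-|[]]; exact Hax.
  - destruct r; [exact Na | simpl in *; lia].
Qed.

Lemma triangle_3_4_4_not_ricci_flat x y z a b c w1 w2 :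
  ricci_flat nbr -> nbhd_is x [y; z; a] -> nbhd_is y [x; z; b; c] -> nbhd_is z [x; y; w1; w2] ->
  False.
Proof.
  intros Hflat Nx Ny Nz.
  assert (Nx' : nbhd_is x [z; y; a])
    by (apply (nbhd_is_perm x [y; z; a]); [apply perm_swap | exact Nx]).
  assert (Ny' : nbhd_is y [x; z; c; b])
    by (apply (nbhd_is_perm y [x; z; b; c]); [repeat constructor | exact Ny]).
  assert (Nz' : nbhd_is z [x; y; w2; w1])
    by (apply (nbhd_is_perm z [x; y; w1; w2]); [repeat constructor | exact Nz]).
  assert (adj nbr x y /\ adj nbr x z /\ adj nbr x a) as (Hxy & Hxz & Hxa)
    by (repeat split; apply Nx; simpl; tauto).
  destruct (Nat.lt_ge_cases (deg nbr a) 2) as [Ha | Ha].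
  { exact (pendant_edge_not_flat x y z a Nx (leaf_nbhd a x (adj_sym x a Hxa) Ha) (Hflat x a Hxa)). }
  destruct (classic (within_two a b)) as [Hb | Hb].
  { exact (triangle_edge_not_flat_deg4 x y z a b c Nx Ny Hb (Hflat x y Hxy)). }
  destruct (classic (within_two a c)) as [Hc | Hc].
  { exact (triangle_edge_not_flat_deg4 x y z a c b Nx Ny' Hc (Hflat x y Hxy)). }
  destruct (classic (within_two a w1)) as [Hw1 | Hw1].
  { exact (triangle_edge_not_flat_deg4 x z y a w1 w2 Nx' Nz Hw1 (Hflat x z Hxz)). }
  destruct (classic (within_two a w2)) as [Hw2 | Hw2].
  { exact (triangle_edge_not_flat_deg4 x z y a w2 w1 Nx' Nz' Hw2 (Hflat x z Hxz)). }
  exact (far_edge_not_flat x y z a b c w1 w2 Nx Ny Nz Hb Hc Hw1 Hw2 Ha (Hflat x a Hxa)).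
Qed.

Lemma triangle_nbhds x y z :
  adj nbr x y -> adj nbr x z -> adj nbr y z -> deg nbr x = 3%nat -> deg nbr y = 4%nat ->
  exists a b c r, nbhd_is x [y; z; a] /\ nbhd_is y [x; z; b; c] /\ nbhd_is z (x :: y :: r)
                  /\ deg nbr z = (2 + length r)%nat.
Proof.
  intros Hxy Hxz Hyz Hx Hy.
  assert (Hpair : forall v u w, adj nbr v u -> adj nbr v w -> u <> w ->
                    exists r, nbhd_is v (u :: w :: r) /\ deg nbr v = (2 + length r)%nat).
  { intros v u w Hvu Hvw Huw; apply (nbhd_complete v [u; w]).
    - constructor; [intros [<-|[]]; contradiction | repeat constructor; simpl; tauto].
    - intros s [<-|[<-|[]]]; assumption. }
  destruct (Hpair x y z Hxy Hxz (adj_neq y z Hyz)) as ([|a [|]] & Nx & Hdx); simpl in Hdx; try lia.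
  destruct (Hpair y x z (adj_sym x y Hxy) Hyz (adj_neq x z Hxz)) as ([|b [|c [|]]] & Ny & Hdy);
    simpl in Hdy; try lia.
  destruct (Hpair z x y (adj_sym x z Hxz) (adj_sym y z Hyz) (adj_neq x y Hxy)) as (r & Nz & Hdz).
  exists a, b, c, r; auto.
Qed.

End Graph.

Theorem lemma7 (V : Type) (nbr : V -> list V) :
  simple_graph nbr -> connected nbr ->
  (forall v, (deg nbr v <= 4)%nat) ->
  ricci_flat nbr ->
  forall x y, adj nbr x y -> deg nbr x = 3%nat -> deg nbr y = 4%nat ->
  ~ edge_in_cycle3 nbr x y.
Proof.
  intros Hs Hc Hdeg Hflat x y Hxy Hx Hy [z (_ & _ & Hxz & Hyz)].
  destruct (triangle_nbhds nbr Hs x y z Hxy Hxz Hyz Hx Hy)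
    as (a & b & c & r & Nx & Ny & Nz & Hz).
  assert (Nx' : nbhd_is nbr x [z; y; a])
    by (apply (nbhd_is_perm nbr x [y; z; a]); [apply perm_swap | exact Nx]).
  pose proof (Hdeg z) as Hz4; rewrite Hz in Hz4.
  destruct r as [|w1 [|w2 [|]]]; simpl in Hz4; try lia.
  - exact (triangle_edge_not_flat_deg2 nbr Hs x z y a Nx' Nz (Hflat x z Hxz)).
  - exact (triangle_edge_not_flat_deg3 nbr Hs x z y a w1 Nx' Nz (Hflat x z Hxz)).
  - exact (triangle_3_4_4_not_ricci_flat nbr Hs Hc x y z a b c w1 w2 Hflat Nx Ny Nz).
Qed.
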